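(* Assume $R\neq0$. Then: (1) every $\nu_{(w,e)}$ with $w=\sum_n r_nx^n\in W_1$ satisfying $\sum_n r_n=1$ is a right unit of $T_e$; in particular $T_e$ has more than one right unit; (2) every minimal prime ideal $I\neq T_e$ of $End_1$ has at most one right unit. Consequently, $T_e$ is the unique minimal prime ideal of $End_1$ having more than one right unit.
   Context: $R$ is a commutative associative ring with unit. A group representation $(A,G,\cdot)$ is an $R$-module $A$ with a right action of the group $G$ by $R$-module automorphisms; homomorphisms are pairs $(\mu^{(1)},\mu^{(2)})$ ($R$-linear map, group homomorphism) with $\mu^{(1)}(a\cdot g)=\mu^{(1)}(a)\bullet\mu^{(2)}(g)$. $F_1=\langle x\rangle$ is infinite cyclic with identity $e$, and $W_1=RF_1$ is the group algebra on which $F_1$ acts by right multiplication. $End_1$ is the monoid of endomorphisms of $(W_1,F_1)$. $\nu_{(w,g)}$ denotes the endomorphism with $1\mapsto w$ and $x\mapsto g$, and $T_e=\{\nu_{(w,e)}:w\in W_1\}$. Ideals of a monoid $M$ are subsets $I$ with $MI\cup IM\subseteq I$; $I$ is prime if $ab\in I$ implies $a\in I$ or $b\in I$. A right unit of $I$ is $u\in I$ with $\nu\circ u=\nu$ for all $\nu\in I$. *)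

From HB Require Import structures.
From mathcomp Require Import all_boot all_algebra.
From mathcomp Require Import finmap.
From mathcomp.multinomials Require Import monalg.

Set Implicit Arguments.
Unset Strict Implicit.
Unset Printing Implicit Defensive.

Import GRing.Theory.
Local Open Scope ring_scope.

(* F_1 = <x> infinite cyclic is modelled additively by int: x^k <-> k,
   the identity e is 0 and the generator x is 1.
   W_1 = R F_1 is the group algebra, i.e. finitely supported functions
   int -> R (monalg's {malg R[int]}), an R-module (lmodType R). *)
Definition W1 (R : comNzRingType) := {malg R[int]}.

Definition xpow (R : comNzRingType) (k : int) : W1 R := mkmalgU k (1 : R).

Definition W1one (R : comNzRingType) : W1 R := xpow R 0.

Definition act (R : comNzRingType) (a : W1 R) (k : int) : W1 R :=
  \sum_(n <- msupp a) mkmalgU (n + k) (a@_n).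

Definition W1coef_sum (R : comNzRingType) (w : W1 R) : R :=
  \sum_(n <- msupp w) w@_n.

Definition Endo (R : comNzRingType) := ((W1 R -> W1 R) * (int -> int))%type.

Definition is_end (R : comNzRingType) (m : Endo R) : Prop :=
  [/\ (forall (r : R) (a b : W1 R), m.1 (r *: a + b) = r *: m.1 a + m.1 b),
      (forall g h : int, m.2 (g + h) = m.2 g + m.2 h)
    & (forall (a : W1 R) (g : int), m.1 (act a g) = act (m.1 a) (m.2 g))].

Definition ecomp (R : comNzRingType) (m n : Endo R) : Endo R :=
  (m.1 \o n.1, m.2 \o n.2).

(* subsets of End_1 are predicates on Endo R contained in is_end *)
Definition eset (R : comNzRingType) := Endo R -> Prop.

(* T_e = { nu_(w,e) : w in W_1 }: endomorphisms sending x to e *)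
Definition Te (R : comNzRingType) : eset R :=
  fun m => is_end m /\ m.2 1 = 0.

Definition is_ideal (R : comNzRingType) (I : eset R) : Prop :=
  [/\ exists m, I m,
      (forall m, I m -> is_end m)
    & (forall a m, is_end a -> I m -> I (ecomp a m) /\ I (ecomp m a))].

Definition is_prime (R : comNzRingType) (I : eset R) : Prop :=
  forall a b, is_end a -> is_end b -> I (ecomp a b) -> I a \/ I b.

Definition is_prime_ideal (R : comNzRingType) (I : eset R) : Prop :=
  is_ideal I /\ is_prime I.

Definition is_minimal_prime_ideal (R : comNzRingType) (I : eset R) : Prop :=
  is_prime_ideal I /\
  forall J : eset R, is_prime_ideal J -> (forall m, J m -> I m) ->
    forall m, I m -> J m.

Definition right_unit (R : comNzRingType) (I : eset R) (u : Endo R) : Prop :=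
  I u /\ forall v, I v -> ecomp v u = v.

Definition many_right_units (R : comNzRingType) (I : eset R) : Prop :=
  exists u1 u2, [/\ right_unit I u1, right_unit I u2 & u1 <> u2].

Definition le1_right_unit (R : comNzRingType) (I : eset R) : Prop :=
  forall u1 u2, right_unit I u1 -> right_unit I u2 -> u1 = u2.

Definition eset_eq (R : comNzRingType) (I J : eset R) : Prop :=
  forall m, I m <-> J m.

(* An endomorphism m of (W_1, F_1) is determined by w := m(1) and the image x^d of x, and it acts
   by m(y) = sum_k y_k (w . x^(dk)).  For d = 0 this reads m(y) = eps(y) w, with eps the sum of
   coefficients, so v o u = v for all v in T_e as soon as eps(u(1)) = 1: T_e has many right units.
   If u is a right unit of a prime ideal I, the exponent d of u is idempotent in Z.  When d = 0,
   every element of I has exponent 0, and conversely any m in T_e satisfies m o u = m o (eps(u(1)) id),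
   so primality puts m in I: then I = T_e.  When d = 1 for two right units u1, u2, both
   u1 = u1 o u2 and u2 = u2 o u1 are determined by the product u1(1) u2(1) in the commutative ring
   W_1, hence u1 = u2.  Finally T_e is a minimal prime since the zero endomorphism, which lies in
   every ideal, factors as m o (0, id) for every m in T_e. *)
From HB Require Import structures.
From mathcomp Require Import all_boot all_algebra.
From mathcomp Require Import finmap.
From mathcomp.multinomials Require Import monalg.
From Stdlib Require Import FunctionalExtensionality Classical.
Local Open Scope ring_scope.
Import GRing.Theory.

Lemma additive_int_intmul (V : zmodType) (f : int -> V) :
  {morph f : g h / g + h} -> forall n, f n = f 1 *~ n.
Proof.
move=> fD.
have f0 : f 0 = 0 by apply: (addrI (f 0)); rewrite -fD !addr0.
have fN x : f (- x) = - f x by apply/eqP; rewrite -addr_eq0 -fD addNr f0.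
have fnat (k : nat) : f k = f 1 *~ k.
  by elim: k => [|k IH]; rewrite ?mulr0z // intS fD IH mulrzDr mulr1z.
by case=> k; rewrite ?NegzE ?fN fnat // mulrNz.
Qed.

Section GroupAlgebra.
Variable R : comNzRingType.
Implicit Types a b : W1 R.

Lemma W1coef_sum_fsub a (D : {fset int}) :
  (msupp a `<=` D)%fset -> W1coef_sum a = \sum_(k <- D) a@_k.
Proof.
by move=> le; rewrite /W1coef_sum [LHS](big_fset_incl _ le) => //= x _ /mcoeff_outdom ->.
Qed.

Lemma W1coef_sum0 : W1coef_sum (0 : W1 R) = 0.
Proof. by rewrite /W1coef_sum msupp0 big_nil. Qed.

Lemma W1coef_sumD a b : W1coef_sum (a + b) = W1coef_sum a + W1coef_sum b.
Proof.
rewrite (W1coef_sum_fsub _ _ (msuppD_le a b)).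
rewrite (W1coef_sum_fsub _ _ (fsubsetUl (msupp a) (msupp b))).
rewrite (W1coef_sum_fsub _ _ (fsubsetUr (msupp a) (msupp b))) -big_split /=.
by apply: eq_bigr => k _; rewrite mcoeffD.
Qed.

Lemma W1coef_sumZ r a : W1coef_sum (r *: a) = r * W1coef_sum a.
Proof.
rewrite (W1coef_sum_fsub _ _ (msuppZ_le r a)) /W1coef_sum big_distrr /=.
by apply: eq_bigr => k _; rewrite mcoeffZ.
Qed.

Lemma W1coef_sumU k (c : R) : W1coef_sum (mkmalgU k c : W1 R) = c.
Proof. by rewrite (W1coef_sum_fsub _ _ msuppU_le) big_seq_fset1 mcoeffUU. Qed.

Lemma W1coef_sum_xpow k : W1coef_sum (xpow R k) = 1.
Proof. exact: W1coef_sumU. Qed.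

Lemma W1coef_sum_big (I : Type) (s : seq I) (F : I -> W1 R) :
  W1coef_sum (\sum_(i <- s) F i) = \sum_(i <- s) W1coef_sum (F i).
Proof. exact: (big_morph _ W1coef_sumD W1coef_sum0). Qed.

Lemma mcoeff_act a g k : (act a g)@_k = a@_(k - g).
Proof.
rewrite /act raddf_sum /=; under eq_bigr do rewrite mcoeffU.
have [kg_in|kg_out] := boolP (k - g \in msupp a).
  rewrite (big_fsetD1 (k - g)) //= subrK eqxx mulr1n big1_fset ?addr0 // => n.
  rewrite in_fsetD1 => /andP[ne _] _; case: eqP => // e.
  by move: ne; rewrite -e addrK eqxx.
rewrite big1_fset ?(mcoeff_outdom kg_out) // => n n_in _.
by case: eqP => // e; move: kg_out; rewrite -e addrK n_in.
Qed.

Lemma act0g a : act a 0 = a.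
Proof. by apply/malgP => k; rewrite mcoeff_act subr0. Qed.

Lemma act0 g : act (0 : W1 R) g = 0.
Proof. by apply/malgP => k; rewrite mcoeff_act !mcoeff0. Qed.

Lemma actZ r a g : act (r *: a) g = r *: act a g.
Proof. by apply/malgP => k; rewrite mcoeff_act !mcoeffZ mcoeff_act. Qed.

Lemma W1coef_sum_act a g : W1coef_sum (act a g) = W1coef_sum a.
Proof. by rewrite /act W1coef_sum_big; apply: eq_bigr => n _; apply: W1coef_sumU. Qed.

(* Both sides are the product of a and b in the commutative group algebra. *)
Lemma act_sumC a b :
  \sum_(k <- msupp b) b@_k *: act a k = \sum_(k <- msupp a) a@_k *: act b k.
Proof.
rewrite /act; under eq_bigr do rewrite scaler_sumr.
under [RHS]eq_bigr do rewrite scaler_sumr.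
rewrite exchange_big /=; apply: eq_bigr => n _; apply: eq_bigr => k _.
by apply/malgP => j; rewrite !mcoeffZ !mcoeffU addrC !mulrnAr mulrC.
Qed.

End GroupAlgebra.

Section Endomorphisms.
Variable R : comNzRingType.
Implicit Types (a b w : W1 R) (m : Endo R).

Section OneEndomorphism.
Context {m : Endo R} (m_end : is_end m).

Lemma end_map0 : m.1 0 = 0.
Proof.
case: m_end => mL _ _; apply: (addrI (m.1 0)).
by have := mL 1 0 0; rewrite !scale1r !addr0 => <-.
Qed.

Lemma end_mapD a b : m.1 (a + b) = m.1 a + m.1 b.
Proof. by case: m_end => mL _ _; have := mL 1 a b; rewrite !scale1r. Qed.

Lemma end_mapZ r a : m.1 (r *: a) = r *: m.1 a.
Proof. by case: m_end => mL _ _; rewrite -[r *: a]addr0 mL end_map0 addr0. Qed.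

Lemma end_map_sum (I : Type) (s : seq I) (F : I -> W1 R) :
  m.1 (\sum_(i <- s) F i) = \sum_(i <- s) m.1 (F i).
Proof. exact: (big_morph _ end_mapD end_map0). Qed.

Lemma end_grpE n : m.2 n = m.2 1 * n.
Proof. by case: m_end => _ mD _; rewrite (@additive_int_intmul _ _ mD) mulrzz. Qed.

Lemma end_grp0 : m.2 0 = 0.
Proof. by rewrite end_grpE mulr0. Qed.

Lemma end_mapE y :
  m.1 y = \sum_(k <- msupp y) y@_k *: act (m.1 (W1one R)) (m.2 k).
Proof.
rewrite {1}[y]monalgE end_map_sum; apply: eq_bigr => k _.
case: m_end => _ _ mact; rewrite -mact -end_mapZ; congr (m.1 _).
apply/malgP => j; rewrite mcoeffZ mcoeff_act !mcoeffU.
by rewrite mulr_natr [0 == _]eq_sym subr_eq0 eq_sym.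
Qed.

Lemma Te_mapE : m.2 1 = 0 -> forall y, m.1 y = W1coef_sum y *: m.1 (W1one R).
Proof.
move=> m0 y; rewrite end_mapE /W1coef_sum scaler_suml.
by apply: eq_bigr => k _; rewrite end_grpE m0 mul0r act0g.
Qed.

End OneEndomorphism.

Lemma ecomp_end m1 m2 : is_end m1 -> is_end m2 -> is_end (ecomp m1 m2).
Proof.
case=> L1 D1 A1 [L2 D2 A2]; split => /=.
- by move=> r a b; rewrite L2 L1.
- by move=> g h; rewrite D2 D1.
- by move=> a g; rewrite A2 A1.
Qed.

Lemma end_eq m1 m2 : is_end m1 -> is_end m2 ->
  m1.1 (W1one R) = m2.1 (W1one R) -> m1.2 1 = m2.2 1 -> m1 = m2.
Proof.
move=> E1 E2 eq1 eq2.
have eq_grp : m1.2 = m2.2.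
  by apply: functional_extensionality => n; rewrite (end_grpE E1) (end_grpE E2) eq2.
have eq_map : m1.1 = m2.1.
  by apply: functional_extensionality => y; rewrite (end_mapE E1) (end_mapE E2) eq1 eq_grp.
by case: m1 m2 eq_map eq_grp {E1 E2 eq1 eq2} => [? ?] [? ?] /= -> ->.
Qed.

Definition zero_end : Endo R := (fun _ => 0, fun _ => 0).
Definition grp_id_end : Endo R := (fun _ => 0, id).
Definition scale_end (r : R) : Endo R := (fun a => r *: a, id).
Definition Te_end w : Endo R := (fun a => W1coef_sum a *: w, fun _ => 0).

Lemma zero_end_is_end : is_end zero_end.
Proof. by split => /= *; rewrite ?act0 ?addr0 ?scaler0. Qed.

Lemma grp_id_end_is_end : is_end grp_id_end.
Proof. by split => /= *; rewrite ?act0 ?addr0 ?scaler0. Qed.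

Lemma scale_end_is_end r : is_end (scale_end r).
Proof. by split => /= *; rewrite ?actZ // scalerDr !scalerA mulrC. Qed.

Lemma Te_end_is_end w : is_end (Te_end w).
Proof.
split => /= *; rewrite ?W1coef_sum_act ?act0g ?addr0 //.
by rewrite W1coef_sumD W1coef_sumZ scalerDl scalerA.
Qed.

Lemma right_unit_Te w m : W1coef_sum w = 1 -> is_end m ->
  m.1 (W1one R) = w -> m.2 1 = 0 -> right_unit (@Te R) m.
Proof.
move=> w1 m_end mw m0; split=> // v [v_end v0].
apply: end_eq => //; first exact: ecomp_end.
- by rewrite /= mw (Te_mapE v_end v0) w1 scale1r.
- by rewrite /= m0 (end_grp0 v_end) v0.
Qed.

Lemma right_unit_Te_end k : right_unit (@Te R) (Te_end (xpow R k)).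
Proof.
apply: (right_unit_Te _ _ (W1coef_sum_xpow R k)) => //; first exact: Te_end_is_end.
by rewrite /= W1coef_sum_xpow scale1r.
Qed.

Lemma many_right_units_Te : many_right_units (@Te R).
Proof.
exists (Te_end (xpow R 0)), (Te_end (xpow R 1)).
split; try exact: right_unit_Te_end.
move=> /(congr1 (fun u : Endo R => (u.1 (W1one R))@_0)) /=.
by rewrite W1coef_sum_xpow !scale1r !mcoeffU /= => /eqP; rewrite oner_eq0.
Qed.

Section PrimeIdeal.
Variable I : eset R.
Hypothesis I_prime : is_prime_ideal I.

Let I_end {m} : I m -> is_end m.
Proof. by case: I_prime => -[_ + _] _; apply. Qed.

Lemma right_unit_grp_mul {u v} : right_unit I u -> I v -> u.2 1 * v.2 1 = v.2 1.
Proof.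
move=> [_ uR] Iv; have := congr1 (fun m : Endo R => m.2 1) (uR _ Iv).
by rewrite /= (end_grpE (I_end Iv)) mulrC.
Qed.

Lemma right_unit_grp01 {u} : right_unit I u -> u.2 1 = 0 \/ u.2 1 = 1.
Proof.
move=> uI; have /eqP := right_unit_grp_mul uI uI.1.
rewrite -subr_eq0 -[X in _ - X]mulr1 -mulrBr mulf_eq0 subr_eq0.
by case/orP => /eqP; [left | right].
Qed.

Lemma right_unit_grp0_Te {u} : right_unit I u -> u.2 1 = 0 -> eset_eq I (@Te R).
Proof.
move=> [Iu uR] u0 m; split=> [Im | [m_end m0]].
  split; first exact: I_end.
  have := congr1 (fun v : Endo R => v.2 1) (uR _ Im).
  by rewrite /= u0 (end_grp0 (I_end Im)) => <-.
case: I_prime => -[_ _ I_ideal] I_primeb.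
(* m factors through u up to the scalar eps(u(1)), and the scalar endomorphism is not in I. *)
pose r := W1coef_sum (u.1 (W1one R)).
have mu : ecomp m (scale_end r) = ecomp m u.
  apply: end_eq; [exact: ecomp_end (scale_end_is_end _) | exact: ecomp_end (I_end _) |..].
    by rewrite /= (end_mapZ m_end) (Te_mapE m_end m0 (u.1 _)).
  by rewrite /= u0 (end_grp0 m_end).
have : I (ecomp m (scale_end r)) by rewrite mu; case: (I_ideal _ _ m_end Iu).
case/(I_primeb _ _ m_end (scale_end_is_end r)) => // Ir.
have := congr1 (fun v : Endo R => v.2 1) (uR _ Ir).
by rewrite /= u0 => /eqP; rewrite eq_sym oner_eq0.
Qed.

Lemma right_unit_grp1_eq {u1 u2} : right_unit I u1 -> right_unit I u2 ->
  u1.2 1 = 1 -> u2.2 1 = 1 -> u1 = u2.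
Proof.
move=> [Iu1 u1R] [Iu2 u2R] u1_1 u2_1.
have [E1 E2] := (I_end Iu1, I_end Iu2).
apply: end_eq; rewrite ?u1_1 ?u2_1 //.
rewrite -{1}(u2R _ Iu1) -{2}(u1R _ Iu2) /=.
rewrite (end_mapE E1 (u2.1 _)) (end_mapE E2 (u1.1 _)).
under eq_bigr do rewrite (end_grpE E1) u1_1 mul1r.
under [RHS]eq_bigr do rewrite (end_grpE E2) u2_1 mul1r.
exact: act_sumC.
Qed.

Lemma prime_ideal_le1_right_unit : ~ eset_eq I (@Te R) -> le1_right_unit I.
Proof.
move=> I_neq_Te u1 u2 u1I u2I.
have u21 := right_unit_grp_mul u2I u1I.1; have u12 := right_unit_grp_mul u1I u2I.1.
case: (right_unit_grp01 u1I) => [u1_0|u1_1].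
  by case: I_neq_Te; apply: right_unit_grp0_Te u1I u1_0.
have u2_1 : u2.2 1 = 1 by rewrite -u12 mulrC u21.
exact: right_unit_grp1_eq.
Qed.

End PrimeIdeal.

Lemma Te_prime_ideal : is_prime_ideal (@Te R).
Proof.
split.
  split=> [|m []//|a m a_end [m_end m0]].
    by exists zero_end; split; first exact: zero_end_is_end.
  split; split; try exact: ecomp_end.
    by rewrite /= m0 (end_grp0 a_end).
  by rewrite /= (end_grpE m_end) m0 mul0r.
move=> a b a_end b_end [_ /=]; rewrite (end_grpE a_end) => /eqP.
by rewrite mulf_eq0 => /orP[] /eqP ?; [left | right].
Qed.

Lemma Te_minimal_prime_ideal : is_minimal_prime_ideal (@Te R).
Proof.
split=> [|J [[[m0 Jm0] J_end J_ideal] J_prime] JTe m [m_end m_0]].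
  exact: Te_prime_ideal.
have Jzero : J zero_end.
  have <- : ecomp zero_end m0 = zero_end.
    apply: end_eq => //; last exact: zero_end_is_end.
    exact: ecomp_end zero_end_is_end (J_end _ Jm0).
  by case: (J_ideal _ _ zero_end_is_end Jm0).
have m_grp_id : ecomp m grp_id_end = zero_end.
  apply: end_eq => //; [exact: ecomp_end grp_id_end_is_end | exact: zero_end_is_end |].
  exact: end_map0.
move: Jzero; rewrite -m_grp_id => /(J_prime _ _ m_end grp_id_end_is_end) [//|].
by case/JTe => _ /= /eqP; rewrite oner_eq0.
Qed.

End Endomorphisms.

Theorem mainTheorem13 (R : comNzRingType) (R_nonzero : (1 : R) != 0) :
  [/\ (forall (w : W1 R) (m : Endo R),
          W1coef_sum w = 1 -> is_end m -> m.1 (W1one R) = w -> m.2 1 = 0 ->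
          right_unit (@Te R) m),
      many_right_units (@Te R),
      (forall I : eset R, is_minimal_prime_ideal I -> ~ eset_eq I (@Te R) ->
          le1_right_unit I)
    & is_minimal_prime_ideal (@Te R) /\ many_right_units (@Te R) /\
      (forall I : eset R, is_minimal_prime_ideal I -> many_right_units I ->
          eset_eq I (@Te R))].
Proof.
have le1 I : is_minimal_prime_ideal I -> ~ eset_eq I (@Te R) -> le1_right_unit I.
  by case=> I_prime _; apply: prime_ideal_le1_right_unit.
split; [exact: right_unit_Te | exact: many_right_units_Te | exact: le1 |].
split; [exact: Te_minimal_prime_ideal | split; first exact: many_right_units_Te].
move=> I I_min [u1 [u2 [u1I u2I u12]]]; apply: NNPP => I_neq_Te.
exact/u12/(le1 I I_min I_neq_Te).
Qed.
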